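(* Let $\Omega\subset\mathbb{R}^d$ be a connected, bounded open domain, let $\mathbf{r}=(\mathbf{r}_1,\ldots,\mathbf{r}_n)\in\Upsilon$, and assume the hyperplanes $\mathcal{P}_1(\mathbf{r}_1),\ldots,\mathcal{P}_n(\mathbf{r}_n)$ are pairwise distinct. Then the $n(d+1)$ functions $\{H_i(\mathbf{x}),\,x_1H_i(\mathbf{x}),\,\ldots,\,x_dH_i(\mathbf{x})\}_{i=1}^n$ are linearly independent as functions on $\Omega$.
   Context: $\mathcal{S}^{d-1}$ is the unit sphere in $\mathbb{R}^d$. For $\mathbf{x}\in\mathbb{R}^d$ write $\mathbf{y}=(1,x_1,\ldots,x_d)^T$. For $\mathbf{r}_i=(b_i,\boldsymbol{\omega}_i)\in\mathbb{R}^{d+1}$, $\mathcal{P}_i(\mathbf{r}_i)=\{\mathbf{x}\in\Omega:\boldsymbol{\omega}_i\cdot\mathbf{x}+b_i=0\}$. The admissible set is $\Upsilon=\{\mathbf{r}=(\mathbf{r}_1,\ldots,\mathbf{r}_n): \mathbf{r}_i=(b_i,\boldsymbol{\omega}_i),\ b_i\in\mathbb{R},\ \boldsymbol{\omega}_i\in\mathcal{S}^{d-1},\ \mathcal{P}_i(\mathbf{r}_i)\cap\Omega\neq\emptyset\}$. $H(t)$ is the Heaviside function ($H(t)=1$ for $t>0$, $H(t)=0$ for $t<0$), and $H_i(\mathbf{x})=H(\mathbf{r}_i\cdot\mathbf{y})=H(\boldsymbol{\omega}_i\cdot\mathbf{x}+b_i)$. Linear independence is understood for functions defined almost everywhere on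 $\Omega$. *)

From HB Require Import structures.
From mathcomp Require Import all_boot all_order all_algebra.
From mathcomp Require Import all_classical all_reals all_analysis.
Set Implicit Arguments. Unset Strict Implicit. Unset Printing Implicit Defensive.
Import Order.TTheory GRing.Theory Num.Theory.
Import numFieldNormedType.Exports.
Local Open Scope classical_set_scope.
Local Open Scope ring_scope.

Definition dotv (R : realType) (d : nat) (w x : 'rV[R]_d) : R :=
  \sum_(j < d) w ord0 j * x ord0 j.

Definition unit_sphere (R : realType) (d : nat) : set 'rV[R]_d :=
  [set w | dotv w w = 1].

(* Heaviside function; the value at 0 is irrelevant (statement is a.e.). *)
Definition heaviside (R : realType) (t : R) : R := if 0 < t then 1 else 0.

Definition hyperplane_in (R : realType) (d : nat) (Omega : set 'rV[R]_d)
  (b : R) (w : 'rV[R]_d) : set 'rV[R]_d :=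
  [set x | Omega x /\ dotv w x + b = 0].

(* The admissible set Upsilon: r = (r_1,...,r_n), r_i = (b i, w i). *)
Definition admissible (R : realType) (d n : nat) (Omega : set 'rV[R]_d)
  (b : 'I_n -> R) (w : 'I_n -> 'rV[R]_d) : Prop :=
  forall i, unit_sphere (w i) /\ hyperplane_in Omega (b i) (w i) !=set0.

Definition Hi (R : realType) (d : nat) (b : R) (w x : 'rV[R]_d) : R :=
  heaviside (dotv w x + b).

(* Lebesgue-null subsets of R^d: coverable by countably many closed boxes
   [a k, c k] of arbitrarily small total volume. *)
Definition in_box (R : realType) (d : nat) (a c x : 'rV[R]_d) : Prop :=
  forall j, a ord0 j <= x ord0 j <= c ord0 j.

Definition box_vol (R : realType) (d : nat) (a c : 'rV[R]_d) : R :=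
  \prod_(j < d) (c ord0 j - a ord0 j).

Definition lebesgue_null (R : realType) (d : nat) (A : set 'rV[R]_d) : Prop :=
  forall eps : R, 0 < eps ->
    exists (a c : nat -> 'rV[R]_d),
      (forall k j, a k ord0 j <= c k ord0 j) /\
      (A `<=` \bigcup_k [set x | in_box (a k) (c k) x]) /\
      (forall N, \sum_(k < N) box_vol (a k) (c k) < eps).

Definition ae_zero_on (R : realType) (d : nat) (Omega : set 'rV[R]_d)
  (f : 'rV[R]_d -> R) : Prop :=
  lebesgue_null [set x | Omega x /\ f x != 0].

Definition ae_lin_indep (R : realType) (d : nat) (I : finType)
  (Omega : set 'rV[R]_d) (f : I -> 'rV[R]_d -> R) : Prop :=
  forall c : I -> R,
    ae_zero_on Omega (fun x => \sum_(k : I) c k * f k x) -> forall k, c k = 0.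

(* The n(d+1) functions {H_i, x_1 H_i, ..., x_d H_i}_{i=1..n}, indexed by
   (i, k) with k = 0 for H_i and k = j+1 for x_{j+1} H_i. *)
Definition ridge_family (R : realType) (d n : nat)
  (b : 'I_n -> R) (w : 'I_n -> 'rV[R]_d) :
  'I_n * 'I_d.+1 -> 'rV[R]_d -> R :=
  fun p x =>
    let i := p.1 in let k := p.2 in
    match fintype.split (k : 'I_(1 + d)) with
    | inl _ => Hi (b i) (w i) x
    | inr j => x ord0 j * Hi (b i) (w i) x
    end.

(* Pick y in P_{i0} ∩ Ω on no other hyperplane: a moment curve drawn inside
   P_{i0} meets every other hyperplane in finitely many points, unless that
   hyperplane coincides with P_{i0} in Ω.  Near y the H_j with j <> i0 are
   constant, so on a small cube on either side of P_{i0} the combination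
   Σ c_{i,k} x_k H_i is an affine function; as a cube is not Lebesgue-null,
   vanishing a.e. forces all its coefficients to vanish.  The coefficients on
   the two sides differ exactly by the c_{i0,k}, which are therefore 0. *)

From HB Require Import structures.
From mathcomp Require Import all_boot all_order all_algebra.
From mathcomp Require Import all_classical all_reals all_analysis.
From mathcomp Require Import measurable_realfun ring lra.
Set Implicit Arguments. Unset Strict Implicit. Unset Printing Implicit Defensive.
Import Order.TTheory GRing.Theory Num.Theory.
Import numFieldNormedType.Exports.
Local Open Scope classical_set_scope.
Local Open Scope ring_scope.

Section BoxCovers.
Variable R : realType.

Lemma integral_itv_indic_le (P Q a c r : R) : a <= c -> 0 <= r ->
  (\int[lebesgue_measure]_(t in [set` `[P, Q]]) (r * \1_[set` `[a, c]] t)%:E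
     <= (r * (c - a))%:E)%E.
Proof.
move=> ac r0.
have mPQ : measurable ([set` `[P, Q]] : set R) by exact: measurable_itv.
have mac : measurable ([set` `[a, c]] : set R) by exact: measurable_itv.
have lambda_ac : (lebesgue_measure ([set` `[a, c]] : set R) <= (c - a)%:E)%E.
  by rewrite lebesgue_measure_itv /=; case: ifP; rewrite ?lee_fin ?subr_ge0.
rewrite integralZl_indic //=; last by move=> /lt_geF; rewrite r0.
rewrite integral_indic //= EFinM lee_pmul ?lee_fin //.
apply: le_trans lambda_ac; apply: le_measure; rewrite ?inE //.
exact: measurableI.
Qed.

Lemma le_series_indic_itv (P Q V : R) (r a c : nat -> R) :
  P <= Q -> 0 <= V -> (forall k, 0 <= r k) -> (forall k, a k <= c k) ->
  (forall t, P <= t <= Q ->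
     (V%:E <= \sum_(k <oo) (r k * \1_[set` `[a k, c k]] t)%:E)%E) ->
  ((V * (Q - P))%:E <= \sum_(k <oo) (r k * (c k - a k))%:E)%E.
Proof.
move=> PQ V0 r0 ac cover.
pose g k t := (r k * \1_[set` `[a k, c k]] t)%:E.
have mPQ : measurable ([set` `[P, Q]] : set R) by exact: measurable_itv.
have g0 k t : [set` `[P, Q]] t -> (0 <= g k t)%E.
  by move=> _; rewrite lee_fin mulr_ge0 // indicE ler0n.
have mg k : measurable_fun [set` `[P, Q]] (g k).
  apply/measurable_EFinP; apply: measurable_funM; first exact: measurable_cst.
  by apply: measurable_indic; exact: measurable_itv.
have mS : measurable_fun [set` `[P, Q]] (fun t => \sum_(k <oo) g k t)%E.
  by apply: (@ge0_emeasurable_sum _ _ _ _ g xpredT) => [k t /g0|k _].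
have lambda_D : lebesgue_measure ([set` `[P, Q]] : set R) = (Q - P)%:E.
  rewrite lebesgue_measure_itv /= lte_fin; case: ltP => [_|QP]; first by rewrite -EFinD.
  have -> : Q = P by apply/eqP; rewrite eq_le QP PQ.
  by rewrite subrr.
have int_V : (\int[lebesgue_measure]_(t in [set` `[P, Q]]) V%:E = (V * (Q - P))%:E)%E.
  by rewrite (integral_cst lebesgue_measure mPQ) EFinM; congr (_ * _)%E.
have le_int := ge0_le_integral lebesgue_measure mPQ _ _ mS.
rewrite -int_V; apply: (le_trans (le_int _ _ _ _)).
- by move=> t _; rewrite lee_fin.
- exact: measurable_cst.
- by move=> t; rewrite /= in_itv /=; exact: cover.
rewrite integral_nneseries //.
apply: lee_nneseries => [k _ _|k _]; first by apply: integral_ge0 => t; exact: g0.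
exact: integral_itv_indic_le.
Qed.

(* The Boolean weights [S] let the induction on [d] keep only the boxes whose
   first edge meets the current one-dimensional slice. *)
Lemma box_vol_le_cover (d : nat) (P Q : 'I_d -> R) (A C : nat -> 'I_d -> R)
    (S : nat -> bool) :
  (forall j, P j <= Q j) -> (forall k j, A k j <= C k j) ->
  (forall x : 'I_d -> R, (forall j, P j <= x j <= Q j) ->
     exists2 k, S k & forall j, A k j <= x j <= C k j) ->
  ((\prod_j (Q j - P j))%:E
     <= \sum_(k <oo) ((S k)%:R * \prod_j (C k j - A k j))%:E)%E.
Proof.
elim: d => [|d IH] in P Q A C S *.
  move=> _ _ /(_ P (fun j => ltac:(by case: j))) [k Sk _].
  rewrite big_ord0; apply: le_trans (nneseries_lim_ge k.+1 _); last first.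
    by move=> i _; rewrite lee_fin big_ord0 mulr1 ler0n.
  rewrite big_mkord big_ord_recr /= Sk big_ord0 mulr1 -[X in (X <= _)%E]add0e.
  by rewrite leeD2r // sume_ge0 // => i _; rewrite lee_fin big_ord0 mulr1 ler0n.
move=> PQ AC cover.
rewrite big_ord_recl mulrC.
under eq_eseriesr do rewrite big_ord_recl mulrCA mulrC.
apply: le_series_indic_itv => // [|k|t /andP[Pt tQ]].
- by apply: prodr_ge0 => j _; rewrite subr_ge0.
- by rewrite mulr_ge0 // prodr_ge0 // => j _; rewrite subr_ge0.
pose St k := S k && (A k ord0 <= t <= C k ord0).
under eq_eseriesr => k _ do rewrite indicE mem_setE in_itv /= mulrAC -natrM mulnb.
apply: (IH _ _ _ _ St) => // x' x'_in.
pose x (i : 'I_d.+1) := if unlift ord0 i is Some j then x' j else t.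
have [k Sk Hk] : exists2 k, S k & forall i, A k i <= x i <= C k i.
  by apply: cover => i; rewrite /x; case: unliftP => [j ->|->] //; rewrite Pt tQ.
exists k; first by have := Hk ord0; rewrite /St /x unlift_none Sk.
by move=> j; have := Hk (lift ord0 j); rewrite /x liftK.
Qed.

End BoxCovers.

Section NullSets.
Variables (R : realType) (d : nat).
Implicit Types (q x : 'rV[R]_d) (e : R).

Definition cube q e : set 'rV[R]_d :=
  [set x | forall j, `|x ord0 j - q ord0 j| <= e].

Lemma cube_not_lebesgue_null q e (S : set 'rV[R]_d) :
  0 < e -> cube q e `<=` S -> ~ lebesgue_null S.
Proof.
move=> e0 cubeS null.
pose P j := q ord0 j - e; pose Q j := q ord0 j + e.
have PQ j : P j <= Q j by rewrite /P /Q; lra.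
have vol0 : 0 < \prod_j (Q j - P j).
  by apply: prodr_gt0 => j _; rewrite /P /Q; lra.
have [a [c [ac [cover small]]]] := null _ (divr_gt0 vol0 (ltr0Sn _ 1)).
have boxes_cover (x : 'I_d -> R) : (forall j, P j <= x j <= Q j) ->
    exists2 k, true & forall j, a k ord0 j <= x j <= c k ord0 j.
  move=> x_in; have [|k _ x_k] := cover (\row_j x j).
    by apply: cubeS => j; rewrite mxE ler_distl; exact: x_in.
  by exists k => // j; have := x_k j; rewrite mxE.
have := box_vol_le_cover PQ (fun k => ac k) boxes_cover.
under eq_eseriesr do rewrite mul1r.
move=> vol_le.
suff : ((\prod_j (Q j - P j))%:E <= (\prod_j (Q j - P j) / 2)%:E)%E.
  by rewrite lee_fin; lra.
apply: le_trans vol_le _; apply: lime_le.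
  apply: is_cvg_ereal_nneg_natsum => k _.
  by rewrite lee_fin prodr_ge0 // => j _; rewrite subr_ge0.
apply: nearW => N; rewrite -(big_morph EFin EFinD (erefl 0%:E)) lee_fin big_mkord.
exact: ltW.
Qed.

End NullSets.

Section AffineMaps.
Variables (R : realType) (d : nat).
Implicit Types (q x z : 'rV[R]_d) (e r : R).

Definition affine_map (c0 : R) (a : 'I_d -> R) x := c0 + \sum_j a j * x ord0 j.

Lemma affine_map_dist c0 a q x e : cube q e x ->
  `|affine_map c0 a x - affine_map c0 a q| <= (\sum_j `|a j|) * e.
Proof.
move=> x_in; rewrite /affine_map opprD addrACA subrr add0r -sumrB mulr_suml.
apply: (le_trans (ler_norm_sum _ _ _)); apply: ler_sum => j _.
by rewrite -mulrBr normrM ler_wpM2l.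
Qed.

Lemma affine_map_delta c0 a x t j :
  affine_map c0 a (x + t *: delta_mx ord0 j) = affine_map c0 a x + a j * t.
Proof.
rewrite /affine_map -addrA; congr (_ + _).
under eq_bigr => k _ do rewrite !mxE /= mulrDr.
rewrite big_split /=; congr (_ + _).
rewrite (bigD1 j) //= eqxx mulr1 big1 ?addr0 // => k /negbTE ->.
by rewrite mulr0 mulr0.
Qed.

Lemma subset_cube q z e r : 0 <= r ->
  (forall j, `|z ord0 j - q ord0 j| <= e - r) -> cube z r `<=` cube q e.
Proof.
move=> r0 z_in x x_in j; have := z_in j; have := x_in j.
rewrite !ler_distl => /andP[? ?] /andP[? ?]; apply/andP; split; lra.
Qed.

Section AeZero.
Variables (Omega : set 'rV[R]_d) (F : 'rV[R]_d -> R).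
Hypothesis F_ae0 : ae_zero_on Omega F.

Lemma ae_zero_affine_center c0 a q e : 0 < e -> cube q e `<=` Omega ->
  (forall x, cube q e x -> F x = affine_map c0 a x) -> affine_map c0 a q = 0.
Proof.
move=> e0 cube_Omega F_aff; apply/eqP/negP => /negP v_neq0.
set v := affine_map c0 a q in v_neq0.
pose M := 1 + \sum_j `|a j|.
have M0 : 0 < M by rewrite ltr_wpDr // sumr_ge0.
have v0 : 0 < `|v| by rewrite normr_gt0.
pose r := Num.min e (`|v| / (2 * M)).
have r0 : 0 < r by rewrite lt_min e0 divr_gt0 // mulr_gt0.
have r_small : (\sum_j `|a j|) * r < `|v|.
  have : r * M <= `|v| / 2.
    have r_le : r <= `|v| / (2 * M) by rewrite ge_min lexx orbT.
    apply: le_trans (ler_wpM2r (ltW M0) r_le) _.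
    by rewrite [leLHS](_ : _ = `|v| / 2) //; field; rewrite gt_eqF.
  rewrite /M; lra.
have sub_cube : cube q r `<=` cube q e.
  apply: subset_cube => [|j]; first exact: ltW.
  by rewrite subrr normr0 subr_ge0 ge_min lexx.
apply: (cube_not_lebesgue_null r0 _ F_ae0) => x x_in; split.
  exact/cube_Omega/sub_cube.
rewrite F_aff; last exact: sub_cube.
apply/eqP => aff0; have := affine_map_dist c0 a x_in; rewrite aff0 sub0r normrN.
lra.
Qed.

Lemma ae_zero_affine_coef c0 a q e : 0 < e -> cube q e `<=` Omega ->
  (forall x, cube q e x -> F x = affine_map c0 a x) -> c0 = 0 /\ forall j, a j = 0.
Proof.
move=> e0 cube_Omega F_aff.
have e20 : 0 < e / 2 by rewrite divr_gt0.
have aff0 z : cube q (e / 2) z -> affine_map c0 a z = 0.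
  move=> z_in; have sub : cube z (e / 2) `<=` cube q e.
    by apply: subset_cube => [|j]; [exact: ltW | have := z_in j; lra].
  by apply: (ae_zero_affine_center e20) => x /sub; [exact: cube_Omega | exact: F_aff].
have aff0_q : affine_map c0 a q = 0.
  by apply: aff0 => j; rewrite subrr normr0 ltW.
have a0 j : a j = 0.
  have qj_in : cube q (e / 2) (q + (e / 2) *: delta_mx ord0 j).
    move=> k; rewrite !mxE addrAC subrr add0r normrM eqxx normr_nat gtr0_norm //=.
    by case: (_ == _); rewrite ?mulr1n ?mulr0n ?mulr1 ?mulr0 // ltW.
  have := aff0 _ qj_in; rewrite affine_map_delta aff0_q add0r => /eqP.
  by rewrite mulf_eq0 (gt_eqF e20) orbF => /eqP.
split=> //; move: aff0_q; rewrite /affine_map big1 ?addr0 // => j _.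
by rewrite a0 mul0r.
Qed.

End AeZero.
End AffineMaps.

Section InnerProduct.
Variables (R : realType) (d : nat).
Implicit Types (v w x y : 'rV[R]_d).

Lemma dotvC w x : dotv w x = dotv x w.
Proof. by apply: eq_bigr => j _; rewrite mulrC. Qed.

Lemma dotvDr w x y : dotv w (x + y) = dotv w x + dotv w y.
Proof. by rewrite /dotv -big_split; apply: eq_bigr => j _; rewrite mxE mulrDr. Qed.

Lemma dotvZr w a x : dotv w (a *: x) = a * dotv w x.
Proof. by rewrite /dotv mulr_sumr; apply: eq_bigr => j _; rewrite mxE mulrCA. Qed.

Lemma dotvBr w x y : dotv w (x - y) = dotv w x - dotv w y.
Proof. by rewrite dotvDr -scaleN1r dotvZr mulN1r. Qed.

Lemma dotvZl a w x : dotv (a *: w) x = a * dotv w x.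
Proof. by rewrite dotvC dotvZr dotvC. Qed.

Lemma dotvBl v w x : dotv (v - w) x = dotv v x - dotv w x.
Proof. by rewrite dotvC dotvBr !(dotvC x). Qed.

Lemma unit_sphere_coord_le1 w k : unit_sphere w -> `|w ord0 k| <= 1.
Proof.
rewrite /unit_sphere /dotv /= => w1.
have : w ord0 k * w ord0 k <= 1.
  by rewrite -w1 (bigD1 k) //= lerDl sumr_ge0 // => j _; rewrite -expr2 sqr_ge0.
by rewrite ler_norml => ?; apply/andP; split; nra.
Qed.

Lemma dotv_unit_le w x e : unit_sphere w -> (forall k, `|x ord0 k| <= e) ->
  `|dotv w x| <= d%:R * e.
Proof.
move=> w1 x_le; apply: (le_trans (ler_norm_sum _ _ _)).
rewrite -[d in d%:R]card_ord mulr_natl -sumr_const; apply: ler_sum => k _.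
by rewrite normrM -[e]mul1r ler_pM // unit_sphere_coord_le1.
Qed.

Lemma open_cube_sub (Omega : set 'rV[R]_d) x : open Omega -> Omega x ->
  exists2 r : R, 0 < r & cube x r `<=` Omega.
Proof.
move=> /[apply] /nbhs_ballP [e /= e0 ball_Omega].
exists (e / 2) => [|y y_in]; first by rewrite divr_gt0.
apply: ball_Omega; split => // i j; rewrite (ord1 i) /ball /= distrC.
by apply: le_lt_trans (y_in j) _; lra.
Qed.

End InnerProduct.

Lemma heaviside_addr_small (R : realType) (v e : R) :
  `|e| < `|v| -> heaviside (v + e) = heaviside v.
Proof.
rewrite /heaviside => e_small.
have /ler_normlP[? ?] := lexx `|e|.
case: (ltP 0 v) => v0; move: e_small.
  by rewrite (gtr0_norm v0) => ?; rewrite ifT //; lra.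
rewrite (ler0_norm v0) => ?; rewrite ifF //; apply/negbTE; rewrite -leNgt; lra.
Qed.

Lemma exists_nonroot_unit_itv (F : numFieldType) (p : {poly F}) :
  p != 0 -> exists2 s : F, 0 <= s <= 1 & ~~ root p s.
Proof.
move=> p_neq0; pose rs := [seq (k.+1%:R : F)^-1 | k <- iota 0 (size p)].
have /allPn [_ /mapP [k _ ->] nroot] : ~~ all (root p) rs.
  have uniq_rs : uniq rs.
    rewrite map_inj_uniq ?iota_uniq // => i j /invr_inj /eqP.
    by rewrite eqr_nat eqSS => /eqP.
  apply/negP => all_roots; have := max_poly_roots p_neq0 all_roots uniq_rs.
  by rewrite size_map size_iota ltnn.
exists (k.+1%:R^-1) => //.
by rewrite invr_ge0 ler0n /= invf_le1 ?ltr0n // ler1n.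
Qed.

Section MomentCurve.
Variables (R : realType) (d : nat).

Definition moment_curve (s : R) : 'rV[R]_d := \row_k s ^+ k.+1.

Definition moment_poly (a : 'rV[R]_d) : {poly R} := \sum_(k < d) a ord0 k *: 'X^(k.+1).

Lemma horner_moment_poly a s : (moment_poly a).[s] = dotv a (moment_curve s).
Proof.
rewrite horner_sum; apply: eq_bigr => k _.
by rewrite hornerZ hornerXn mxE.
Qed.

Lemma coef0_moment_poly a : (moment_poly a)`_0 = 0.
Proof. by rewrite coef_sum big1 // => k _; rewrite coefZ coefXn mulr0. Qed.

Lemma coefS_moment_poly a (k : 'I_d) : (moment_poly a)`_k.+1 = a ord0 k.
Proof.
rewrite coef_sum (bigD1 k) //= coefZ coefXn eqxx mulr1 big1 ?addr0 // => i ik.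
rewrite coefZ coefXn eqSS.
have /negbTE -> : (k : nat) != i by rewrite eq_sym.
by rewrite mulr0.
Qed.

Lemma moment_poly_eq0 a : moment_poly a = 0 -> a = 0.
Proof.
move=> a0; apply/rowP => k.
by rewrite -coefS_moment_poly a0 coef0 mxE.
Qed.

Lemma moment_curve_coord_le1 (s : R) k : 0 <= s <= 1 -> `|moment_curve s ord0 k| <= 1.
Proof.
by move=> /andP[s0 s1]; rewrite mxE normrX exprn_ile1 // ger0_norm.
Qed.

End MomentCurve.

Section HyperplaneCurve.
Variables (R : realType) (d : nat) (p0 w0 : 'rV[R]_d) (eps : R).
Hypothesis w0_unit : unit_sphere w0.

Definition hyperplane_curve (s : R) : 'rV[R]_d :=
  p0 + eps *: (moment_curve d s - dotv w0 (moment_curve d s) *: w0).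

Lemma dotv_hyperplane_curve_normal s : dotv w0 (hyperplane_curve s) = dotv w0 p0.
Proof.
rewrite dotvDr dotvZr dotvBr dotvZr.
by rewrite [dotv w0 w0]w0_unit mulr1 subrr mulr0 addr0.
Qed.

Lemma dotv_hyperplane_curve v s : dotv v (hyperplane_curve s) =
  dotv v p0 + eps * (moment_poly (v - dotv v w0 *: w0)).[s].
Proof.
rewrite horner_moment_poly dotvDr dotvZr dotvBr dotvZr dotvBl dotvZl.
ring.
Qed.

Lemma hyperplane_curve_in_cube s : 0 <= eps -> 0 <= s <= 1 ->
  cube p0 (eps * d.+1%:R) (hyperplane_curve s).
Proof.
move=> eps0 s01 k; rewrite !mxE addrAC subrr add0r normrM ger0_norm //.
rewrite ler_wpM2l // -natr1 [_ + 1]addrC.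
apply: (le_trans (ler_normB _ _)); rewrite lerD //.
  by have := moment_curve_coord_le1 k s01; rewrite mxE.
rewrite normrM -[d%:R]mulr1 ler_pM ?unit_sphere_coord_le1 //.
rewrite -[d%:R]mulr1; apply: dotv_unit_le => // j; exact: moment_curve_coord_le1.
Qed.

End HyperplaneCurve.

Lemma hyperplane_in_scale (R : realType) (d : nat) (Omega : set 'rV[R]_d)
    (b c : R) (w : 'rV[R]_d) :
  c != 0 -> hyperplane_in Omega (c * b) (c *: w) = hyperplane_in Omega b w.
Proof.
move=> c_neq0; apply/seteqP; split => x [Ox x_in]; split => //; move: x_in.
  by rewrite dotvZl -mulrDr => /eqP; rewrite mulf_eq0 (negbTE c_neq0) => /eqP.
by rewrite dotvZl -mulrDr => ->; rewrite mulr0.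
Qed.

Lemma parallel_hyperplanes_through_eq (R : realType) (d : nat)
    (Omega : set 'rV[R]_d) (p0 w0 w1 : 'rV[R]_d) (b0 b1 : R) :
  unit_sphere w1 -> w1 - dotv w1 w0 *: w0 = 0 ->
  dotv w0 p0 + b0 = 0 -> dotv w1 p0 + b1 = 0 ->
  hyperplane_in Omega b1 w1 = hyperplane_in Omega b0 w0.
Proof.
set c := dotv w1 w0 => w1_unit /subr0_eq w1E p0_on0 p0_on1.
have c_neq0 : c != 0.
  apply/eqP => c0; move: w1_unit; rewrite /unit_sphere /= w1E c0 scale0r.
  by rewrite /dotv big1 => [/esym/eqP|j _]; rewrite ?oner_eq0 // mxE mul0r.
have b1E : b1 = c * b0.
  have p0_dotv : dotv w0 p0 = - b0 by lra.
  move: p0_on1; rewrite w1E dotvZl p0_dotv mulrN addrC => /eqP.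
  by rewrite subr_eq0 => /eqP.
by rewrite w1E b1E hyperplane_in_scale.
Qed.

Lemma exists_point_on_only_hyperplane (R : realType) (d n : nat)
    (Omega : set 'rV[R]_d) (b : 'I_n -> R) (w : 'I_n -> 'rV[R]_d) (i0 : 'I_n) :
  open Omega -> admissible Omega b w ->
  (forall i j : 'I_n, i != j ->
     hyperplane_in Omega (b i) (w i) <> hyperplane_in Omega (b j) (w j)) ->
  exists y, [/\ Omega y, dotv (w i0) y + b i0 = 0 &
                forall j, j != i0 -> dotv (w j) y + b j != 0].
Proof.
move=> Omega_open adm distinct.
have [w0_unit [p0 [Op0 p0_on]]] := adm i0.
have [r r0 cube_Omega] := open_cube_sub Omega_open Op0.
pose eps := r / d.+1%:R.
have eps0 : 0 < eps by rewrite divr_gt0.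
pose y := hyperplane_curve p0 (w i0) eps.
pose q j : {poly R} := (dotv (w j) p0 + b j)%:P +
  eps *: moment_poly (w j - dotv (w j) (w i0) *: w i0).
have q_horner j s : (q j).[s] = dotv (w j) (y s) + b j.
  by rewrite hornerD hornerC hornerZ dotv_hyperplane_curve addrAC.
have q_neq0 j : j != i0 -> q j != 0.
  move=> ji0; apply/eqP => qj0.
  have on_p0 : dotv (w j) p0 + b j = 0.
    have : (q j)`_0 = 0 by rewrite qj0 coef0.
    by rewrite coefD coefC coefZ coef0_moment_poly mulr0 addr0.
  move: qj0; rewrite /q on_p0 add0r => /eqP; rewrite scaler_eq0 (gt_eqF eps0) /=.
  move=> /eqP /moment_poly_eq0 parallel.
  apply: (distinct _ _ ji0).
  exact: parallel_hyperplanes_through_eq (adm j).1 parallel _ on_p0.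
have [|s s01 nroot] := exists_nonroot_unit_itv (p := \prod_(j | j != i0) q j).
  by apply/prodf_neq0 => j; exact: q_neq0.
exists (y s); split.
- apply/cube_Omega; rewrite -[r](@divfK _ d.+1%:R) ?pnatr_eq0 //.
  by apply: hyperplane_curve_in_cube => //; exact: ltW.
- by rewrite dotv_hyperplane_curve_normal.
move=> j ji0; rewrite -q_horner; apply: contra nroot => /eqP qj0.
by rewrite /root horner_prod (bigD1 j) //= qj0 mul0r.
Qed.

Lemma sum_affine_map (R : realType) (d n : nat) (h c0 : 'I_n -> R)
    (a : 'I_n -> 'I_d -> R) (x : 'rV[R]_d) :
  \sum_i h i * affine_map (c0 i) (a i) x =
  affine_map (\sum_i h i * c0 i) (fun j => \sum_i h i * a i j) x.
Proof.
rewrite /affine_map; under eq_bigr => i _ do rewrite mulrDr.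
rewrite big_split /=; congr (_ + _).
under eq_bigr => i _ do rewrite mulr_sumr.
rewrite exchange_big /=; apply: eq_bigr => j _; rewrite mulr_suml.
by apply: eq_bigr => i _; rewrite mulrA.
Qed.

Lemma ridge_family_sum (R : realType) (d n : nat) (b : 'I_n -> R)
    (w : 'I_n -> 'rV[R]_d) (c : 'I_n * 'I_d.+1 -> R) (x : 'rV[R]_d) :
  \sum_p c p * ridge_family b w p x =
  \sum_i Hi (b i) (w i) x * affine_map (c (i, ord0)) (fun j => c (i, lift ord0 j)) x.
Proof.
rewrite (eq_bigr (fun p => c (p.1, p.2) * ridge_family b w (p.1, p.2) x)); last by case.
rewrite -(pair_bigA _ (fun i k => c (i, k) * ridge_family b w (i, k) x)) /=.
apply: eq_bigr => i _; rewrite big_ord_recl /affine_map mulrDr mulr_sumr.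
have split0 : fintype.split (ord0 : 'I_(1 + d)) = inl ord0.
  have -> : (ord0 : 'I_(1 + d)) = lshift d (ord0 : 'I_1) by apply: val_inj.
  exact: (unsplitK (inl _)).
have splitS j : fintype.split (lift ord0 j : 'I_(1 + d)) = inr j.
  have -> : (lift ord0 j : 'I_(1 + d)) = rshift 1 j by apply: val_inj.
  exact: (unsplitK (inr _)).
rewrite /ridge_family /= split0 mulrC; congr (_ + _); apply: eq_bigr => j _.
by rewrite splitS mulrA mulrC.
Qed.

Lemma Hi_cube_const (R : realType) (d : nat) (b : R) (w y : 'rV[R]_d) (r : R) :
  unit_sphere w -> d%:R * r < `|dotv w y + b| ->
  forall x, cube y r x -> Hi b w x = Hi b w y.
Proof.
move=> w_unit r_small x x_in; rewrite /Hi.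
have -> : dotv w x + b = (dotv w y + b) + dotv w (x - y) by rewrite dotvBr; ring.
apply/heaviside_addr_small/(le_lt_trans _ r_small)/dotv_unit_le => // k.
by rewrite !mxE; exact: x_in.
Qed.

Lemma exists_cube_off_hyperplanes (R : realType) (d n : nat) (Omega : set 'rV[R]_d)
    (b : 'I_n -> R) (w : 'I_n -> 'rV[R]_d) (i0 : 'I_n) (y : 'rV[R]_d) :
  open Omega -> Omega y -> (forall j, j != i0 -> dotv (w j) y + b j != 0) ->
  exists2 r : R, 0 < r &
    cube y r `<=` Omega /\ forall j, j != i0 -> d%:R * r < `|dotv (w j) y + b j|.
Proof.
move=> Omega_open Oy y_off; have [r0 r00 cube_Omega] := open_cube_sub Omega_open Oy.
pose r := \big[Num.min/r0]_(j | j != i0) (`|dotv (w j) y + b j| / d.+1%:R).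
have d1_gt0 : 0 < d.+1%:R :> R by rewrite ltr0n.
have r_gt0 : 0 < r by apply: lt_bigmin => // j /y_off ?; rewrite divr_gt0 ?normr_gt0.
exists r => //; split=> [|j ji0].
  apply: (subset_trans _ cube_Omega); apply: subset_cube => [|k]; first exact: ltW.
  by rewrite subrr normr0 subr_ge0 bigmin_le_id.
have le_r : r <= `|dotv (w j) y + b j| / d.+1%:R by exact: bigmin_le_cond.
apply: (le_lt_trans (ler_wpM2l (ler0n _ _) le_r)).
rewrite mulrCA gtr_pMr ?normr_gt0 ?y_off // ltr_pdivrMr // mul1r ltr_nat //.
Qed.

Section SideCubes.
Variables (R : realType) (d n : nat) (b : 'I_n -> R) (w : 'I_n -> 'rV[R]_d).
Variables (i0 : 'I_n) (y : 'rV[R]_d) (r : R).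
Hypothesis w_unit : forall i, unit_sphere (w i).
Hypothesis y_on : dotv (w i0) y + b i0 = 0.
Hypothesis r_gt0 : 0 < r.
Hypothesis r_small : forall j, j != i0 -> d%:R * r < `|dotv (w j) y + b j|.

(* Cubes of this radius centred at y ± (r/2) w_{i0} lie in [cube y r] and on
   one side of P_{i0}. *)
Definition side_radius := r / (2 * d.+1%:R).

Definition side_coef (s : R) (i : 'I_n) :=
  if i == i0 then heaviside s else Hi (b i) (w i) y.

Lemma side_radius_gt0 : 0 < side_radius.
Proof. by rewrite divr_gt0 // mulr_gt0 ?ltr0n. Qed.

Lemma side_cube_sub s : `|s| = r / 2 ->
  cube (y + s *: w i0) side_radius `<=` cube y r.
Proof.
move=> sE; apply: subset_cube => [|k]; first exact/ltW/side_radius_gt0.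
rewrite !mxE addrAC subrr add0r normrM sE.
have rho_le : side_radius <= r / 2.
  by rewrite ler_pM2l // lef_pV2 ?posrE ?mulr_gt0 ?ler_peMr ?ler1n ?ltr0n.
have r2_ge0 : 0 <= r / 2 by rewrite divr_ge0 // ltW.
apply: le_trans (ler_wpM2l r2_ge0 (unit_sphere_coord_le1 k (w_unit i0))) _.
lra.
Qed.

Lemma side_radius_small : d%:R * side_radius < r / 2.
Proof.
have d1_gt0 : 0 < d.+1%:R :> R by rewrite ltr0n.
have -> : d%:R * side_radius = r / 2 * (d%:R / d.+1%:R).
  by rewrite /side_radius; field; rewrite gt_eqF.
by rewrite gtr_pMr ?divr_gt0 // ltr_pdivrMr // mul1r ltr_nat.
Qed.

Lemma Hi_side_cube s x i : `|s| = r / 2 ->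
  cube (y + s *: w i0) side_radius x -> Hi (b i) (w i) x = side_coef s i.
Proof.
move=> sE x_in; rewrite /side_coef; case: eqP => [->|/eqP ii0].
  have dotv_center : dotv (w i0) (y + s *: w i0) + b i0 = s.
    by rewrite dotvDr dotvZr [dotv (w i0) (w i0)]w_unit mulr1 addrAC y_on add0r.
  rewrite (Hi_cube_const (w_unit i0) _ x_in) /Hi dotv_center // sE.
  exact: side_radius_small.
by apply: Hi_cube_const (w_unit i) (r_small ii0) _ (side_cube_sub sE x_in).
Qed.

Lemma side_coef_jump (f : 'I_n -> R) :
  \sum_i side_coef (r / 2) i * f i - \sum_i side_coef (- (r / 2)) i * f i = f i0.
Proof.
have r2_gt0 : 0 < r / 2 by rewrite divr_gt0.
rewrite -sumrB (bigD1 i0) //= big1 => [|i ii0]; last first.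
  by rewrite /side_coef (negbTE ii0) subrr.
rewrite /side_coef eqxx /heaviside r2_gt0 ifF ?mul1r ?mul0r ?subr0 ?addr0 //.
by apply/negbTE; rewrite -leNgt oppr_le0 ltW.
Qed.

Variables (Omega : set 'rV[R]_d) (c : 'I_n * 'I_d.+1 -> R).
Hypothesis cube_Omega : cube y r `<=` Omega.
Hypothesis ridge_ae0 :
  ae_zero_on Omega (fun x => \sum_p c p * ridge_family b w p x).

Lemma side_coef_sums_eq0 s : `|s| = r / 2 ->
  \sum_i side_coef s i * c (i, ord0) = 0 /\
  forall j, \sum_i side_coef s i * c (i, lift ord0 j) = 0.
Proof.
move=> sE.
apply: (ae_zero_affine_coef ridge_ae0
  (a := fun j => \sum_i side_coef s i * c (i, lift ord0 j)) side_radius_gt0).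
  by move=> x /(side_cube_sub sE); exact: cube_Omega.
move=> x x_in; rewrite ridge_family_sum -sum_affine_map.
by apply: eq_bigr => i _; rewrite (Hi_side_cube i sE x_in).
Qed.

End SideCubes.

Theorem lemma2p2 (R : realType) (d n : nat) (Omega : set 'rV[R]_d)
  (b : 'I_n -> R) (w : 'I_n -> 'rV[R]_d) :
  open Omega -> connected Omega ->
  (exists M : R, forall x, Omega x -> `|x| <= M) ->
  admissible Omega b w ->
  (forall i j : 'I_n, i != j ->
     hyperplane_in Omega (b i) (w i) <> hyperplane_in Omega (b j) (w j)) ->
  ae_lin_indep Omega (ridge_family b w).
Proof.
move=> Omega_open _ _ adm distinct c ridge_ae0 [i0 k].
have w_unit i : unit_sphere (w i) := (adm i).1.
have [y [Oy y_on y_off]] := exists_point_on_only_hyperplane i0 Omega_open adm distinct.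
have [r r_gt0 [cube_Omega r_small]] := exists_cube_off_hyperplanes Omega_open Oy y_off.
have r2_gt0 : 0 < r / 2 by rewrite divr_gt0.
have side_eq0 := side_coef_sums_eq0 w_unit y_on r_gt0 r_small cube_Omega ridge_ae0.
have [C_pos A_pos] := side_eq0 (r / 2) (gtr0_norm r2_gt0).
have [C_neg A_neg] := side_eq0 (- (r / 2)) (etrans (normrN _) (gtr0_norm r2_gt0)).
have jump := side_coef_jump b w i0 y r_gt0.
case: (unliftP ord0 k) => [j ->|->].
  by rewrite -(jump (fun i => c (i, _))) A_pos A_neg subrr.
by rewrite -(jump (fun i => c (i, _))) C_pos C_neg subrr.
Qed.
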